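(* Let $\Omega$ be an open subset of $\mathbb{R}^p$ and let $f,f_n\colon\Omega\to\mathbb{R}^q$ ($n\in\mathbb{N}$), with $q\le p$, be $C^1$ maps such that $f_n'\to f'$ locally uniformly on $\Omega$ and $f_n\to f$ pointwise on $\Omega$. If $b\in\mathbb{R}^q$ is a regular value of $f$, then $f_n^{-1}(b)$ converges to $f^{-1}(b)$ in the Painlevé–Kuratowski sense in $\Omega$.
   Context: $b$ is a regular value of $f$ if $f'(x)$ is surjective for every $x\in f^{-1}(b)$. For subsets $A_n$ of the metric space $\Omega$, $\liminf A_n$ is the set of $x\in\Omega$ that are limits of sequences $x_n\in A_n$, $\limsup A_n$ is the set of $x\in\Omega$ that are limits of sequences $x_{n_k}\in A_{n_k}$ along some $n_1<n_2<\dots$, and $A_n$ converges to $A$ in the Painlevé–Kuratowski sense in $\Omega$ if $\liminf A_n=\limsup A_n=A$. *)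

From HB Require Import structures.
From mathcomp Require Import all_boot all_order all_algebra.
From mathcomp Require Import all_classical all_reals all_analysis.
Set Implicit Arguments. Unset Strict Implicit. Unset Printing Implicit Defensive.
Import Order.TTheory GRing.Theory Num.Theory.
Import numFieldNormedType.Exports.
Local Open Scope classical_set_scope.
Local Open Scope ring_scope.

(* Euclidean-type spaces R^p are modelled as row vectors 'rV[R]_p with
   MathComp-Analysis' normed structure; f' (x) is the differential 'd f x. *)

Definition C1_on (R : realType) (p q : nat) (O : set 'rV[R]_p)
    (f : 'rV[R]_p -> 'rV[R]_q) : Prop :=
  (forall x, O x -> differentiable f x) /\
  (forall x, O x -> forall eps : R, 0 < eps -> exists2 delta : R, 0 < delta &
     forall y, O y -> `|y - x| < delta ->
       forall u : 'rV[R]_p, `|u| <= 1 -> `|'d f y u - 'd f x u| <= eps).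

Definition deriv_cvg_locally_uniformly (R : realType) (p q : nat)
    (O : set 'rV[R]_p) (F : nat -> 'rV[R]_p -> 'rV[R]_q)
    (f : 'rV[R]_p -> 'rV[R]_q) : Prop :=
  forall x, O x -> exists2 r : R, 0 < r &
    (forall y, `|y - x| < r -> O y) /\
    forall eps : R, 0 < eps -> exists N : nat, forall n : nat, (N <= n)%N ->
      forall y, `|y - x| < r ->
        forall u : 'rV[R]_p, `|u| <= 1 -> `|'d (F n) y u - 'd f y u| <= eps.

Definition regular_value (R : realType) (p q : nat) (O : set 'rV[R]_p)
    (f : 'rV[R]_p -> 'rV[R]_q) (b : 'rV[R]_q) : Prop :=
  forall x, O x -> f x = b -> forall v : 'rV[R]_q, exists u : 'rV[R]_p, 'd f x u = v.

Definition PK_liminf (R : realType) (p : nat) (O : set 'rV[R]_p)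
    (A : nat -> set 'rV[R]_p) : set 'rV[R]_p :=
  [set x | O x /\ exists u : nat -> 'rV[R]_p,
     (exists N : nat, forall n : nat, (N <= n)%N -> A n (u n)) /\ u @ \oo --> x].

Definition PK_limsup (R : realType) (p : nat) (O : set 'rV[R]_p)
    (A : nat -> set 'rV[R]_p) : set 'rV[R]_p :=
  [set x | O x /\ exists (phi : nat -> nat) (u : nat -> 'rV[R]_p),
     (forall k : nat, (phi k < phi k.+1)%N) /\
     (forall k : nat, A (phi k) (u k)) /\ u @ \oo --> x].

Definition PK_converges (R : realType) (p : nat) (O : set 'rV[R]_p)
    (A : nat -> set 'rV[R]_p) (B : set 'rV[R]_p) : Prop :=
  PK_liminf O A = B /\ PK_limsup O A = B.

From HB Require Import structures.
From mathcomp Require Import all_boot all_order all_algebra.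
From mathcomp Require Import all_classical all_reals all_analysis.
From mathcomp Require Import lra ring.
Import Order.TTheory GRing.Theory Num.Theory.
Import numFieldNormedType.Exports.
Local Open Scope classical_set_scope.
Local Open Scope ring_scope.

(* If zeros x_k of F_(n_k) - b tend to x, then F_(n_k) x - b = O(|x - x_k|)
   since the derivatives F_n' are uniformly bounded near x, hence
   f x = lim F_(n_k) x = b. Conversely, if f x = b, then near x and for n
   large F_n is C^1-close to an affine map whose linear part f'(x) has a
   bounded right inverse U, so the Newton-type map w |-> w - (F_n (x + w U) - b)
   is a contraction of a small ball; its fixed point gives a zero z_n of
   F_n - b with |z_n - x| <= C |F_n x - b|, which tends to 0. *)

Section normed_module_facts.
Context {R : realType} {V W : normedModType R}.

Lemma linear_diff_le_unit_ball (D1 D2 : {linear V -> W}) (eps : R) :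
  (forall u, `|u| <= 1 -> `|D1 u - D2 u| <= eps) ->
  forall u, `|D1 u - D2 u| <= eps * `|u|.
Proof.
move=> D12 u; have [->|u0] := eqVneq u 0.
  by rewrite !linear0 addr0 !normr0 mulr0.
have nu0 : 0 < `|u| by rewrite normr_gt0.
pose v := `|u|^-1 *: u.
have uE : u = `|u| *: v by rewrite /v scalerA divff ?scale1r ?gt_eqF.
have v1 : `|v| <= 1 by rewrite /v normrZ normfV normr_id mulVf ?gt_eqF.
have Du (D : {linear V -> W}) : D u = `|u| *: D v by rewrite -linearZ /= -uE.
by rewrite !Du -scalerBr normrZ normr_id mulrC ler_pM2r // D12.
Qed.

Lemma closed_ball_segment (x0 a c : V) (s t : R) :
  `|a - x0| <= s -> `|c - x0| <= s -> 0 <= t <= 1 ->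
  `|a + t *: (c - a) - x0| <= s.
Proof.
move=> ha hc /andP[t0 t1].
have -> : c - a = (c - x0) - (a - x0) by rewrite opprB addrA subrK.
rewrite addrAC; move: (a - x0) (c - x0) ha hc => A C hA hC.
have -> : A + t *: (C - A) = (1 - t) *: A + t *: C.
  by rewrite scalerBr scalerBl scale1r addrA addrAC.
apply: le_trans (ler_normD _ _) _.
rewrite !normrZ !ger0_norm ?subr_ge0 //.
have : (1 - t) * `|A| <= (1 - t) * s by rewrite ler_wpM2l ?subr_ge0.
have : t * `|C| <= t * s by rewrite ler_wpM2l.
lra.
Qed.

Lemma cvg_dist_dominated (a : nat -> V) (l : V) (d : nat -> W) (m : W) (K : R) :
  (\forall n \near \oo, `|l - a n| <= K * `|m - d n|) -> d @ \oo --> m ->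
  a @ \oo --> l.
Proof.
move=> aKd /cvgrPdist_lt dm; apply/cvgrPdist_lt => e e0.
have K1 : 0 < `|K| + 1 by rewrite ltr_pwDr.
near=> n; apply: le_lt_trans (_ : (`|K| + 1) * `|m - d n| < e).
  apply: le_trans (_ : K * `|m - d n| <= _); first by near: n.
  by rewrite ler_wpM2r // (le_trans (ler_norm K)) // lerDl.
rewrite mulrC -ltr_pdivlMr //; near: n; apply: dm; rewrite divr_gt0.
Unshelve. all: by end_near.
Qed.

End normed_module_facts.

Lemma increasing_cvg_oo (phi : nat -> nat) :
  (forall k, (phi k < phi k.+1)%N) -> phi @ \oo --> \oo.
Proof.
move=> phiS; have phi_ge k : (k <= phi k)%N.
  by elim: k => // k IH; exact: leq_ltn_trans IH (phiS k).
move=> P [N _ NP]; exists N => // k /= Nk; apply: NP.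
exact: leq_trans Nk (phi_ge k).
Qed.

Lemma contraction_fixpoint_closed_ball {R : realType} {V : completeNormedModType R}
    (H : V -> V) (k : {nonneg R}) (rho : R) : k%:num < 1 -> 0 < rho ->
  (forall w, `|w| <= rho -> `|H w| <= rho) ->
  (forall w1 w2, `|w1| <= rho -> `|w2| <= rho -> `|H w1 - H w2| <= k%:num * `|w1 - w2|) ->
  exists2 w, `|w| <= rho & H w = w.
Proof.
move=> k1 rho0 H_ball H_contr.
pose U : set V := closed_ball 0 rho.
have UE w : U w <-> `|w| <= rho.
  by rewrite /U closed_ballE //= /closed_ball_ /= distrC subr0.
have HU : set_fun U U H by move=> w /UE /H_ball /UE.
pose Hf : {fun U >-> U} := HB.pack H (isFun.Build _ _ U U H HU).
have Hctr : is_contraction Hf.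
  by exists k; split => // -[w1 w2] [/UE ? /UE ?]; exact: H_contr.
have U0 : U 0 by apply/UE; rewrite normr0 ltW.
have [w /UE Uw Hw] := banach_fixed_point Hctr (@closed_ball_closed _ _ _ _) (ex_intro _ 0 U0).
by exists w.
Qed.

Section matrix_norm.
Context {R : realType} {m n : nat}.

Lemma mx_entry_le_norm (M : 'M[R]_(m, n)) i j : `|M i j| <= `|M|.
Proof.
rewrite [leRHS]/Num.Def.normr/= mx_normrE.
exact: (le_bigmax _ (fun ij : 'I_m * 'I_n => `|M ij.1 ij.2|) (i, j)).
Qed.

Lemma mx_norm_le_entries (M : 'M[R]_(m, n)) (K : R) :
  0 <= K -> (forall i j, `|M i j| <= K) -> `|M| <= K.
Proof.
move=> K0 MK; rewrite [leLHS]/Num.Def.normr/= mx_normrE.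
by apply: bigmax_le => // -[i j] _; exact: MK.
Qed.

End matrix_norm.

Lemma norm_mulmx_le {R : realType} {p q : nat} (v : 'rV[R]_q) (U : 'M[R]_(q, p)) :
  `|v *m U| <= (\sum_i `|row i U|) * `|v|.
Proof.
rewrite mulmx_sum_row mulr_suml; apply: le_trans (ler_norm_sum _ _ _) _.
apply: ler_sum => i _; rewrite normrZ mulrC ler_wpM2l //.
exact: mx_entry_le_norm.
Qed.

Lemma surjective_linear_right_inverse {R : realType} {p q : nat}
    (L : {linear 'rV[R]_p -> 'rV[R]_q}) :
  (forall v, exists u, L u = v) -> exists U : 'M[R]_(q, p), forall v, L (v *m U) = v.
Proof.
move=> Lsurj; have [u Lu] := choice (fun j : 'I_q => Lsurj 'e_j).
exists (\matrix_j u j) => v; rewrite mulmx_sum_row linear_sum /=.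
under eq_bigr do rewrite rowK linearZ /= Lu.
by rewrite [RHS]row_sum_delta.
Qed.

(* The norm of 'rV is the sup norm of the coordinates, so the scalar mean
   value theorem applied to each coordinate suffices. *)
Lemma segment_mvt_le {R : realType} {V : normedModType R} {q : nat}
    (g A : V -> 'rV[R]_q) (x y : V) (K : R) :
  (forall t : R, 0 <= t <= 1 -> differentiable g (x + t *: (y - x))) ->
  (forall t : R, 0 <= t <= 1 -> `|'d g (x + t *: (y - x)) (y - x) - A (y - x)| <= K) ->
  `|g y - g x - A (y - x)| <= K.
Proof.
move=> dg Kb.
have K0 : 0 <= K by apply: le_trans (Kb 0 _); rewrite ?lexx ?ler01.
apply: mx_norm_le_entries => // i j; rewrite (ord1 i) !mxE.
pose h := (cst x + *:%R^~ (y - x)) : R -> V.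
have hE (t : R) : h t = x + t *: (y - x) by [].
pose G := g \o h.
have Gd (t : R) : 0 <= t <= 1 -> differentiable G t.
  by move=> t01; apply: differentiable_comp; [exact: ex_diff | rewrite hE; exact: dg].
have GD (t : R) : 0 <= t <= 1 -> 'D_1 G t = 'd g (h t) (y - x).
  move=> t01; rewrite deriveE; last exact: Gd.
  rewrite diff_comp; [|exact: ex_diff|by rewrite hE; exact: dg].
  by rewrite /= diff_val /= add0r scale1r.
pose phi (s : R) := G s ord0 j.
have phid (t : R) : 0 <= t <= 1 -> derivable phi t 1.
  move=> t01; have : derivable G t 1 by apply: diff_derivable; exact: Gd.
  by move/derivable_mxP; apply.
have phiD (t : R) : 0 <= t <= 1 -> 'D_1 phi t = 'd g (h t) (y - x) ord0 j.
  by move=> t01; rewrite -GD // derive_mx ?mxE //; apply: diff_derivable; exact: Gd.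
have [c c01 phic] : exists2 c, c \in `[0, 1]%R & phi 1 - phi 0 = 'D_1 phi c * (1 - 0).
  apply: MVT_segment; first exact: ler01.
    move=> s; rewrite in_itv /= => /andP[s0 s1].
    by apply: derivableP; apply: phid; rewrite !ltW.
  apply: continuous_subspace_itv => s; rewrite in_itv /= => s01.
  by apply: differentiable_continuous; apply/derivable1_diffP; exact: phid.
move: c01; rewrite in_itv /= => c01.
have -> : g y ord0 j - g x ord0 j = phi 1 - phi 0.
  by rewrite /phi /G /= !hE scale1r scale0r addr0 [x + _]addrC subrK.
rewrite phic subr0 mulr1 phiD //; apply: le_trans (Kb c c01).
by have := mx_entry_le_norm ('d g (h c) (y - x) - A (y - x)) ord0 j; rewrite !mxE.
Qed.

(* Row vectors are complete and normed, but the library does not declare the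
   joint structure on 'rV, which the Banach fixed point theorem requires. *)
Definition complete_rV (R : realType) (q : nat) := 'rV[R]_q.
HB.instance Definition _ (R : realType) (q : nat) := NormedModule.on (complete_rV R q).
HB.instance Definition _ (R : realType) (q : nat) := Complete.on (complete_rV R q).

Lemma approx_right_invertible_zero {R : realType} {p q : nat}
    (G L : 'rV[R]_p -> 'rV[R]_q) (U : 'M[R]_(q, p)) (c rho : R) (x0 : 'rV[R]_p) :
  0 < c -> 0 < rho -> (forall v, L (v *m U) = v) -> (forall v : 'rV[R]_q, `|v *m U| <= c * `|v|) ->
  (forall y z, `|y - x0| <= c * rho -> `|z - x0| <= c * rho ->
     `|G y - G z - L (y - z)| <= (2 * c)^-1 * `|y - z|) ->
  `|G x0| <= rho / 2 ->
  exists2 z, `|z - x0| <= 2 * c * `|G x0| & G z = 0.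
Proof.
move=> c0 rho0 LU normU GL Gx0.
have U_ball w : `|w| <= rho -> `|x0 + w *m U - x0| <= c * rho.
  move=> hw; rewrite addrAC subrr add0r; apply: le_trans (normU w) _.
  by rewrite ler_wpM2l // ltW.
pose H w := w - G (x0 + w *m U).
have H_contr w1 w2 : `|w1| <= rho -> `|w2| <= rho ->
    `|H w1 - H w2| <= 2^-1 * `|w1 - w2|.
  move=> h1 h2; set z1 := x0 + w1 *m U; set z2 := x0 + w2 *m U.
  have zE : z1 - z2 = (w1 - w2) *m U by rewrite opprD addrACA subrr add0r mulmxBl.
  have -> : H w1 - H w2 = - (G z1 - G z2 - L (z1 - z2)).
    rewrite zE LU /H -/z1 -/z2; move: (G z1) (G z2) => a1 a2.
    by apply/rowP => j; rewrite !mxE; ring.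
  rewrite normrN; apply: le_trans (GL _ _ (U_ball _ h1) (U_ball _ h2)) _.
  rewrite zE; apply: le_trans (_ : (2 * c)^-1 * (c * `|w1 - w2|) <= _).
    by rewrite ler_wpM2l // invr_ge0 mulr_ge0 // ltW.
  by rewrite mulrA invfM divfK ?gt_eqF.
have H0 : H 0 = - G x0 by rewrite /H mul0mx addr0 sub0r.
have H_le w : `|w| <= rho -> `|H w| <= 2^-1 * `|w| + `|G x0|.
  move=> hw; rewrite -(subrK (H 0) (H w)); apply: le_trans (ler_normD _ _) _.
  apply: lerD; last by rewrite H0 normrN.
  by have := H_contr w 0 hw; rewrite normr0 subr0; apply; exact: ltW.
have H_ball w : `|w| <= rho -> `|H w| <= rho.
  by move=> hw; apply: le_trans (H_le w hw) _; move: hw Gx0; lra.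
have half_lt1 : (2^-1 : R) < 1 by rewrite invf_lt1 // ltr1n.
have [w hw Hw] := @contraction_fixpoint_closed_ball R (complete_rV R q) H
  (2^-1)%:nng rho half_lt1 rho0 H_ball H_contr.
have Gw : G (x0 + w *m U) = 0.
  have : G (x0 + w *m U) = w - H w by rewrite /H subKr.
  by rewrite Hw subrr.
exists (x0 + w *m U) => //.
have w_le : `|w| <= 2 * `|G x0| by have := H_le w hw; rewrite Hw; lra.
rewrite addrAC subrr add0r; apply: le_trans (normU w) _.
by rewrite [2 * c]mulrC -mulrA ler_wpM2l // ltW.
Qed.

Lemma PK_liminf_subset_limsup {R : realType} {p : nat} (O : set 'rV[R]_p) A :
  PK_liminf O A `<=` PK_limsup O A.
Proof.
move=> x [Ox [u [[N uA] u_cvg]]]; split=> //.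
exists (fun k => k + N)%N, (fun k => u (k + N)%N); split=> [k|]; first by rewrite ltn_add2r.
split=> [k|]; first by apply: uA; rewrite leq_addl.
apply: cvg_comp u_cvg => P [M _ MP]; exists M => // k /= Mk.
by apply: MP; exact: leq_trans Mk (leq_addr _ _).
Qed.

Section approximating_sequence.
Context {R : realType} {p q : nat} {O : set 'rV[R]_p}.
Context {f : 'rV[R]_p -> 'rV[R]_q} {F : nat -> 'rV[R]_p -> 'rV[R]_q}.
Hypotheses (f_C1 : C1_on O f) (F_diff : forall n x, O x -> differentiable (F n) x).
Hypothesis dF_cvg : deriv_cvg_locally_uniformly O F f.

Lemma diff_close_near x0 (eps : R) : O x0 -> 0 < eps ->
  exists2 r : R, 0 < r & (forall y, `|y - x0| <= r -> O y) /\
    \forall n \near \oo, forall y, `|y - x0| <= r ->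
      forall u, `|'d (F n) y u - 'd f x0 u| <= eps * `|u|.
Proof.
move=> Ox0 eps0; have eps20 : 0 < eps / 2 by rewrite divr_gt0.
have [r1 r10 [r1O dF_unif]] := dF_cvg x0 Ox0.
have [d d0 df_cont] := f_C1.2 x0 Ox0 _ eps20.
have [N dF_N] := dF_unif _ eps20.
have rd0 : 0 < Num.min r1 d by rewrite lt_min r10 d0.
exists (Num.min r1 d / 2); first by rewrite divr_gt0.
have lt_r1d y : `|y - x0| <= Num.min r1 d / 2 -> `|y - x0| < r1 /\ `|y - x0| < d.
  move=> hy; have : `|y - x0| < Num.min r1 d.
    by apply: le_lt_trans hy _; rewrite ltr_pdivrMr // ltr_pMr ?ltr1n.
  by rewrite lt_min => /andP.
split=> [y /lt_r1d[/r1O] //|]; exists N => // n /= Nn y /lt_r1d[yr1 yd] u.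
have -> : 'd (F n) y u - 'd f x0 u =
    ('d (F n) y u - 'd f y u) + ('d f y u - 'd f x0 u) by rewrite addrA subrK.
apply: le_trans (ler_normD _ _) _; rewrite [eps]splitr mulrDl; apply: lerD.
- exact: linear_diff_le_unit_ball (dF_N n Nn y yr1) u.
- exact: linear_diff_le_unit_ball (df_cont y (r1O y yr1) yd) u.
Qed.

Lemma approx_linear_near x0 (eps : R) : O x0 -> 0 < eps ->
  exists2 r : R, 0 < r & (forall y, `|y - x0| <= r -> O y) /\
    \forall n \near \oo, forall y z, `|y - x0| <= r -> `|z - x0| <= r ->
      `|F n y - F n z - 'd f x0 (y - z)| <= eps * `|y - z|.
Proof.
move=> Ox0 eps0; have [r r0 [rO dF_near]] := diff_close_near x0 eps Ox0 eps0.
exists r => //; split=> //; apply: filterS dF_near => n dF_n y z hy hz.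
have seg t : 0 <= t <= 1 -> `|z + t *: (y - z) - x0| <= r by exact: closed_ball_segment.
by apply: segment_mvt_le => t /seg ht; [exact/F_diff/rO | exact: dF_n].
Qed.

Hypothesis F_cvg : forall x, O x -> (fun n => F n x) @ \oo --> f x.

Lemma PK_limsup_zeros_subset (b : 'rV[R]_q) :
  PK_limsup O (fun n => O `&` F n @^-1` [set b]) `<=` O `&` f @^-1` [set b].
Proof.
move=> x [Ox [phi [u [phiS [u_zero u_cvg]]]]]; split=> //=.
have [r r0 [_ F_near]] := approx_linear_near x 1 Ox ltr01.
have [k _ dfx_lip] := linear_lipschitz (diff_continuous (f_C1.1 x Ox)).
have Fphi_b : (fun j => F (phi j) x) @ \oo --> b.
  apply: (cvg_dist_dominated _ _ _ _ (1 + k) _ u_cvg); near=> j.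
  have Fj : forall y z, `|y - x| <= r -> `|z - x| <= r ->
      `|F (phi j) y - F (phi j) z - 'd f x (y - z)| <= 1 * `|y - z|.
    by near: j; exact: increasing_cvg_oo _ phiS _ F_near.
  have uj : `|u j - x| <= r.
    near: j; move/cvgrPdist_le : u_cvg => /(_ r r0); apply: filterS => j.
    by rewrite distrC.
  have [_ /= <-] := u_zero j.
  rewrite [`|x - _|]distrC mulrDl -(subrK ('d f x (u j - x)) (F _ (u j) - _)).
  apply: le_trans (ler_normD _ _) (lerD _ (dfx_lip _)).
  by apply: Fj => //; rewrite subrr normr0 ltW.
have Fphi_fx : (fun j => F (phi j) x) @ \oo --> f x :=
  cvg_comp _ _ (increasing_cvg_oo _ phiS) (F_cvg x Ox).
exact: (cvg_unique _ Fphi_fx Fphi_b).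
Unshelve. all: by end_near.
Qed.

Lemma zeros_subset_PK_liminf (b : 'rV[R]_q) : regular_value O f b ->
  O `&` f @^-1` [set b] `<=` PK_liminf O (fun n => O `&` F n @^-1` [set b]).
Proof.
move=> f_reg x [Ox /= fxb]; split=> //.
have [U LU] := surjective_linear_right_inverse _ (f_reg x Ox fxb).
pose c := 1 + \sum_i `|row i U|.
have c0 : 0 < c by apply: lt_le_trans ltr01 _; rewrite lerDl sumr_ge0.
have normU (v : 'rV[R]_q) : `|v *m U| <= c * `|v|.
  by apply: le_trans (norm_mulmx_le v U) _; rewrite ler_wpM2r // lerDr.
have eps0 : 0 < (2 * c)^-1 by rewrite invr_gt0 mulr_gt0.
have [r r0 [rO F_near]] := approx_linear_near x _ Ox eps0.
have rho0 : 0 < r / c by rewrite divr_gt0.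
have Fx_near : \forall n \near \oo, `|F n x - b| <= r / c / 2.
  move/cvgrPdist_le : (F_cvg x Ox) => /(_ (r / c / 2)); rewrite divr_gt0 // fxb.
  by move=> /(_ isT); apply: filterS => n; rewrite distrC.
have F_zero : \forall n \near \oo, exists z,
    (O z /\ F n z = b) /\ `|z - x| <= 2 * c * `|F n x - b|.
  near=> n.
  have [z zx Fz] : exists2 z, `|z - x| <= 2 * c * `|F n x - b| & F n z - b = 0.
    apply: (approx_right_invertible_zero (fun y => F n y - b) ('d f x) U c (r / c) x
      c0 rho0 LU normU _ _); last by near: n.
    rewrite mulrC divfK ?gt_eqF // => y z hy hz; rewrite opprB addrA subrK.
    by move: y z hy hz; near: n.
  exists z; split; last exact: zx.
  split; last by apply/eqP; rewrite -subr_eq0 Fz.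
  apply: rO; apply: le_trans zx _.
  have Fxn : `|F n x - b| <= r / c / 2 by near: n.
  have -> : r = 2 * c * (r / c / 2) by field; rewrite gt_eqF.
  by apply: ler_wpM2l Fxn; rewrite mulr_ge0 // ltW.
have [N _ zN] := F_zero.
have /choice[u uP] : forall n, exists z, (N <= n)%N ->
    (O z /\ F n z = b) /\ `|z - x| <= 2 * c * `|F n x - b|.
  by move=> n; have [/zN[z zP]|_] := leqP N n; [exists z | exists x].
exists u; split; first by exists N => n /uP[].
apply: (cvg_dist_dominated _ _ _ _ (2 * c)) (F_cvg x Ox); rewrite fxb.
by exists N => // n /uP[_]; rewrite distrC [`|b - _|]distrC.
Unshelve. all: by end_near.
Qed.

End approximating_sequence.

Theorem mainTheorem7 (R : realType) (p q : nat) (O : set 'rV[R]_p)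
    (f : 'rV[R]_p -> 'rV[R]_q) (F : nat -> 'rV[R]_p -> 'rV[R]_q) (b : 'rV[R]_q) :
  open O -> (q <= p)%N ->
  C1_on O f -> (forall n : nat, C1_on O (F n)) ->
  deriv_cvg_locally_uniformly O F f ->
  (forall x, O x -> (fun n => F n x) @ \oo --> f x) ->
  regular_value O f b ->
  PK_converges O (fun n => O `&` F n @^-1` [set b]) (O `&` f @^-1` [set b]).
Proof.
(* Openness of O is already encoded in the local uniform convergence of the
   derivatives, and q <= p follows from regularity whenever f^-1(b) is nonempty. *)
move=> _ _ f_C1 F_C1 dF_cvg F_cvg f_reg.
have F_diff n x : O x -> differentiable (F n) x := (F_C1 n).1 x.
have sup_sub := PK_limsup_zeros_subset f_C1 F_diff dF_cvg F_cvg b.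
have sub_inf := zeros_subset_PK_liminf f_C1 F_diff dF_cvg F_cvg b f_reg.
split; apply/seteqP; split=> // x.
- by move/PK_liminf_subset_limsup; exact: sup_sub.
- by move/sub_inf/PK_liminf_subset_limsup.
Qed.
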